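(* Let $n\ge 1$ and $1\le k\le n$. The number of $\alpha\in\mathcal{ORCT}_n$ with $w^+(\alpha)=k$ is $$F(n;k)=2\sum_{p=1}^{k}\binom{n-1}{p-1}-1.$$
   Context: $X_n=\{1,2,\dots,n\}$ with its usual order; maps are written on the right ($x\alpha$). A map $\alpha:X_n\to X_n$ is order-preserving if $x\le y$ implies $x\alpha\le y\alpha$, order-reversing if $x\le y$ implies $x\alpha\ge y\alpha$, and a contraction if $|x\alpha-y\alpha|\le|x-y|$ for all $x,y$. $\mathcal{ORCT}_n$ is the set of all maps $X_n\to X_n$ (defined on all of $X_n$) that are contractions and are either order-preserving or order-reversing. Right waist $w^+(\alpha)=\max(\mathrm{Im}\,\alpha)$. *)

(* X_n = {1,...,n} is modelled by 'I_n via i |-> i+1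
   (a translation, which preserves order and distances). *)
From mathcomp Require Import all_boot.
Set Implicit Arguments. Unset Strict Implicit. Unset Printing Implicit Defensive.

Definition natdist (a b : nat) : nat := (a - b) + (b - a).

Definition order_preserving n (f : {ffun 'I_n -> 'I_n}) : bool :=
  [forall x : 'I_n, forall y : 'I_n, (x <= y) ==> (f x <= f y)].

Definition order_reversing n (f : {ffun 'I_n -> 'I_n}) : bool :=
  [forall x : 'I_n, forall y : 'I_n, (x <= y) ==> (f y <= f x)].

Definition contraction n (f : {ffun 'I_n -> 'I_n}) : bool :=
  [forall x : 'I_n, forall y : 'I_n, natdist (f x) (f y) <= natdist x y].

Definition in_ORCT n (f : {ffun 'I_n -> 'I_n}) : bool :=
  contraction f && (order_preserving f || order_reversing f).

(* right waist w^+(f) = max Im f, read back in X_n = {1..n} (hence the +1) *)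
Definition right_waist n (f : {ffun 'I_n -> 'I_n}) : nat :=
  \max_(x : 'I_n) (f x).+1.

From mathcomp Require Import all_boot zify.
Set Implicit Arguments. Unset Strict Implicit. Unset Printing Implicit Defensive.

(* An order-preserving contraction of {0..n} is exactly a map whose consecutive
   values increase by 0 or 1.  Such a map f is determined by its last value
   f n = k - 1 together with its set J of "jump positions" j < n, where
   f (j+1) = f j + 1, via  f x = k - 1 - #{j in J | j >= x};  conversely every
   J with #|J| <= k - 1 arises.  Hence the order-preserving members of ORCT_n
   with waist k are in bijection with the subsets of an (n-1)-set of size < k,
   and there are sum_(i<k) C(n-1, i) of them.

   Reversal x |-> f (n-1-x) is an involution exchanging the order-preserving
   and order-reversing contractions and keeping the waist; a map that is both
   is constant, so the two classes share exactly one map of waist k.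
   Inclusion-exclusion gives 2 * sum_(i<k) C(n-1, i) - 1. *)

Lemma card_small_subsets (T : finType) j :
  #|[set S : {set T} | #|S| < j]| = \sum_(i < j) 'C(#|T|, i).
Proof.
elim: j => [|j IHj].
  by rewrite big_ord0; apply/eqP; rewrite cards_eq0; apply/eqP/setP => S; rewrite !inE.
have -> : [set S : {set T} | #|S| < j.+1] =
          [set S : {set T} | #|S| < j] :|: [set S : {set T} | #|S| == j].
  by apply/setP => S; rewrite !inE ltnS leq_eqVlt orbC.
have disjoint_sizes :
    [set S : {set T} | #|S| < j] :&: [set S : {set T} | #|S| == j] = set0.
  by apply/setP => S; rewrite !inE andbC; case: eqP => // ->; rewrite ltnn.
by rewrite cardsU IHj card_draws big_ord_recr /= disjoint_sizes cards0 subn0.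
Qed.

Section Reversal.
Variable n : nat.
Implicit Types f : {ffun 'I_n -> 'I_n}.

Definition reverse f : {ffun 'I_n -> 'I_n} := [ffun x => f (rev_ord x)].

Lemma reverseK : involutive reverse.
Proof. by move=> f; apply/ffunP => x; rewrite !ffunE rev_ordK. Qed.

Lemma contraction_reverse f : contraction f -> contraction (reverse f).
Proof.
move=> /forallP contr; apply/forallP => x; apply/forallP => y; rewrite !ffunE.
move: (contr (rev_ord x)) => /forallP /(_ (rev_ord y)).
by rewrite /natdist /=; have := ltn_ord x; have := ltn_ord y; lia.
Qed.

Lemma reversing_reverse f : order_preserving f -> order_reversing (reverse f).
Proof.
move=> /forallP pres; apply/forallP => x; apply/forallP => y; rewrite !ffunE.
apply/implyP => le_xy; move: (pres (rev_ord y)) => /forallP /(_ (rev_ord x)).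
by apply/implyP; rewrite /=; have := ltn_ord x; have := ltn_ord y; lia.
Qed.

Lemma preserving_reverse f : order_reversing f -> order_preserving (reverse f).
Proof.
move=> /forallP revs; apply/forallP => x; apply/forallP => y; rewrite !ffunE.
apply/implyP => le_xy; move: (revs (rev_ord y)) => /forallP /(_ (rev_ord x)).
by apply/implyP; rewrite /=; have := ltn_ord x; have := ltn_ord y; lia.
Qed.

(* The image of f, hence its right waist, is unchanged by reversal. *)
Lemma right_waist_reverse f : right_waist (reverse f) = right_waist f.
Proof.
rewrite /right_waist [RHS](reindex_inj rev_ord_inj).
by apply: eq_bigr => x _; rewrite ffunE.
Qed.

End Reversal.

Arguments reverse {n}.

Section OrderPreservingContractions.
Variable n : nat.
Implicit Types (f : {ffun 'I_n.+1 -> 'I_n.+1}) (S : {set 'I_n}).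

Lemma right_waist_preserving f :
  order_preserving f -> right_waist f = (f ord_max).+1.
Proof.
move=> /forallP pres; apply/eqP; rewrite eqn_leq; apply/andP; split.
  apply/bigmax_leqP => x _; rewrite ltnS.
  by move: (pres x) => /forallP /(_ ord_max) /implyP; apply; apply: leq_ord.
exact: (@leq_bigmax _ (fun x : 'I_n.+1 => (f x).+1) ord_max).
Qed.

Lemma preserving_reversing_const f x :
  order_preserving f -> order_reversing f -> f x = f ord_max.
Proof.
move=> /forallP /(_ x) /forallP /(_ ord_max) /implyP pres.
move=> /forallP /(_ x) /forallP /(_ ord_max) /implyP revs.
by apply/val_inj/eqP; rewrite eqn_leq pres ?revs ?leq_ord.
Qed.

(* f read as a function on nat (arguments beyond n are clamped to n). *)
Definition fval f (x : nat) : nat := f (inord x).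

Lemma fvalE f (x : 'I_n.+1) : fval f x = f x.
Proof. by rewrite /fval inord_val. Qed.

Definition unit_steps f := forall i, i < n -> fval f i <= fval f i.+1 <= (fval f i).+1.

Lemma unit_steps_bound f x y : unit_steps f -> x <= y -> y <= n ->
  fval f x <= fval f y <= fval f x + (y - x).
Proof.
move=> steps le_xy; elim: y le_xy => [|y IHy]; first by rewrite leqn0 => /eqP ->; lia.
rewrite leq_eqVlt => /orP [/eqP <- _|]; first lia.
rewrite ltnS => le_xy lt_yn; have /andP[] := IHy le_xy (ltnW lt_yn).
by have /andP[] := steps y lt_yn; lia.
Qed.

Lemma unit_stepsP f : reflect (unit_steps f) (contraction f && order_preserving f).
Proof.
apply: (iffP andP) => [[/forallP contr /forallP pres] i lt_in|steps].
  have val_i : (inord i : 'I_n.+1) = i :> nat by rewrite inordK // ltnS ltnW.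
  have val_Si : (inord i.+1 : 'I_n.+1) = i.+1 :> nat by rewrite inordK.
  move: (pres (inord i)) => /forallP /(_ (inord i.+1)); rewrite val_i val_Si leqnSn /=.
  move: (contr (inord i)) => /forallP /(_ (inord i.+1)); rewrite val_i val_Si /natdist.
  by rewrite /fval; lia.
have bound := unit_steps_bound steps.
split; apply/forallP => x; apply/forallP => y; rewrite -!fvalE.
  have ub_x := leq_ord x; have ub_y := leq_ord y; rewrite /natdist.
  by case: (leqP x y) => [le_xy|/ltnW le_yx];
     [have /andP[] := bound _ _ le_xy ub_y | have /andP[] := bound _ _ le_yx ub_x]; lia.
by apply/implyP => le_xy; have /andP[] := bound _ _ le_xy (leq_ord y).
Qed.

Definition memn S (i : nat) : bool := if insub i is Some j then j \in S else false.

Lemma memn_val S (j : 'I_n) : memn S j = (j \in S).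
Proof. by rewrite /memn valK. Qed.

Definition above S (x : nat) : nat := \sum_(x <= i < n) memn S i.

Lemma above_step S x : x < n -> above S x = memn S x + above S x.+1.
Proof. by move=> lt_xn; rewrite /above big_ltn. Qed.

Lemma above_last S : above S n = 0.
Proof. by rewrite /above big_geq. Qed.

Lemma card_above S : #|S| = above S 0.
Proof.
rewrite /above -sum1_card big_mkcond /= big_mkord.
by apply: eq_bigr => j _; rewrite memn_val; case: (j \in S).
Qed.

Lemma above_le_card S x : above S x <= #|S|.
Proof.
rewrite card_above; case: (leqP x n) => [le_xn|/ltnW lt_nx].
  by rewrite [above S 0](@big_cat_nat _ _ _ x) //; apply: leq_addl.
by rewrite /above big_geq.
Qed.

(* The map with jump set S and last value k - 1. *)
Definition ramp k S : {ffun 'I_n.+1 -> 'I_n.+1} :=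
  [ffun x : 'I_n.+1 => inord (k.-1 - above S x)].

Lemma fval_ramp k S x : k <= n.+1 -> x <= n -> fval (ramp k S) x = k.-1 - above S x.
Proof. by move=> le_kn le_xn; rewrite /fval ffunE !inordK //; lia. Qed.

Definition jumps f : {set 'I_n} := [set j : 'I_n | fval f j < fval f j.+1].

(* Each step of a ramp is 1 at the positions of S and 0 elsewhere ... *)
Lemma ramp_unit_steps k S : k <= n.+1 -> #|S| < k -> unit_steps (ramp k S).
Proof.
move=> le_kn small i lt_in; rewrite !fval_ramp ?(ltnW lt_in) //.
have := above_le_card S i; rewrite above_step //.
by case: (memn S i) => /=; lia.
Qed.

Lemma jumps_ramp k S : k <= n.+1 -> #|S| < k -> jumps (ramp k S) = S.
Proof.
move=> le_kn small; apply/setP => j; rewrite inE -memn_val.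
have lt_jn := ltn_ord j; rewrite !fval_ramp ?(ltnW lt_jn) //.
have := above_le_card S j; rewrite above_step // => bound.
rewrite ltn_sub2lE; last lia.
by rewrite -[X in X < _]add0n ltn_add2r lt0b.
Qed.

Lemma fval_add_above f x : unit_steps f -> x <= n ->
  fval f x + above (jumps f) x = fval f n.
Proof.
move=> steps le_xn; have bound := unit_steps_bound steps.
have -> : above (jumps f) x = \sum_(x <= i < n) (fval f i.+1 - fval f i).
  apply: eq_big_nat => i /andP[_ lt_in].
  rewrite -[i]/(val (Ordinal lt_in)) memn_val inE /=.
  by have /andP[] := steps i lt_in; case: ltnP; lia.
rewrite telescope_sumn_in // => [|i /andP[_ lt_in]]; last by have /andP[] := steps i lt_in.
by have /andP[] := bound x n le_xn (leqnn n); lia.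
Qed.

Lemma ramp_jumps f : unit_steps f -> ramp (fval f n).+1 (jumps f) = f.
Proof.
move=> steps; apply/ffunP => x; rewrite ffunE /=.
have := fval_add_above steps (leq_ord x); rewrite fvalE => climb.
have -> : fval f n - above (jumps f) x = f x by lia.
by rewrite inord_val.
Qed.

Definition preserving_waist k := [set f : {ffun 'I_n.+1 -> 'I_n.+1} |
  [&& contraction f, order_preserving f & right_waist f == k]].

Lemma preserving_waist_ramps k : 1 <= k -> k <= n.+1 ->
  preserving_waist k = ramp k @: [set S : {set 'I_n} | #|S| < k].
Proof.
move=> k_gt0 le_kn; apply/setP => f; rewrite inE; apply/idP/imsetP.
  case/and3P => contr pres /eqP waist.
  have steps : unit_steps f by apply/unit_stepsP/andP.
  have last_val : fval f n = k.-1.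
    by rewrite -[n]/(val (@ord_max n)) fvalE; move: waist; rewrite right_waist_preserving //; lia.
  exists (jumps f); last by rewrite -{1}(ramp_jumps steps) last_val prednK.
  by rewrite inE card_above; have := fval_add_above steps (leq0n n); lia.
case=> S; rewrite inE => small ->.
have /unit_stepsP/andP[-> pres] := ramp_unit_steps le_kn small.
rewrite pres right_waist_preserving // -fvalE fval_ramp // above_last.
by apply/eqP; lia.
Qed.

Lemma card_preserving_waist k : 1 <= k -> k <= n.+1 ->
  #|preserving_waist k| = \sum_(i < k) 'C(n, i).
Proof.
move=> k_gt0 le_kn; rewrite preserving_waist_ramps // card_in_imset.
  by rewrite card_small_subsets card_ord.
by apply: (can_in_inj (g := jumps)) => S; rewrite inE; apply: jumps_ramp.
Qed.

Lemma reversing_waist k :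
  [set f : {ffun 'I_n.+1 -> 'I_n.+1} |
    [&& contraction f, order_reversing f & right_waist f == k]]
  = reverse @: preserving_waist k.
Proof.
apply/setP => f; rewrite inE; apply/idP/imsetP.
  case/and3P => contr revs waist; exists (reverse f); last by rewrite reverseK.
  by rewrite inE contraction_reverse // preserving_reverse // right_waist_reverse.
case=> h; rewrite inE => /and3P[contr pres waist] ->.
by rewrite contraction_reverse // reversing_reverse // right_waist_reverse.
Qed.

Lemma card_preserving_reversing_waist k : 1 <= k -> k <= n.+1 ->
  #|preserving_waist k :&: reverse @: preserving_waist k| = 1.
Proof.
move=> k_gt0 le_kn; rewrite -reversing_waist.
pose const : {ffun 'I_n.+1 -> 'I_n.+1} := [ffun _ => inord k.-1].
apply/eqP/cards1P; exists const; apply/setP => f; rewrite !inE.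
apply/idP/eqP => [|->].
  case/andP => /and3P[_ pres waist] /and3P[_ revs _].
  move: waist; rewrite right_waist_preserving // => /eqP waist.
  by apply/ffunP => x; rewrite ffunE -waist inord_val preserving_reversing_const.
have const_contr : contraction const.
  by apply/forallP => x; apply/forallP => y; rewrite !ffunE /natdist subnn.
have const_pres : order_preserving const.
  by apply/forallP => x; apply/forallP => y; rewrite !ffunE leqnn implybT.
have const_rev : order_reversing const.
  by apply/forallP => x; apply/forallP => y; rewrite !ffunE leqnn implybT.
by rewrite const_contr const_pres const_rev right_waist_preserving // ffunE inordK; lia.
Qed.

End OrderPreservingContractions.

Theorem corollary3p5 (n k : nat) (hn : 1 <= n) (hk1 : 1 <= k) (hkn : k <= n) :
  #|[set f : {ffun 'I_n -> 'I_n} | in_ORCT f && (right_waist f == k)]|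
  = 2 * (\sum_(1 <= p < k.+1) 'C(n - 1, p - 1)) - 1.
Proof.
case: n hn hkn => // n _ le_kn.
have -> : [set f : {ffun 'I_n.+1 -> 'I_n.+1} | in_ORCT f && (right_waist f == k)]
   = preserving_waist n k :|: reverse @: preserving_waist n k.
  rewrite -reversing_waist; apply/setP => f; rewrite !inE /in_ORCT.
  by case: (contraction f); case: (order_preserving f); case: (order_reversing f);
     case: (right_waist f == k).
rewrite cardsU card_preserving_reversing_waist // card_imset; last exact: can_inj (@reverseK _).
rewrite card_preserving_waist // big_add1 /= big_mkord.
under [in RHS]eq_bigr => i _ do rewrite !subSS !subn0.
by rewrite mul2n addnn subn1.
Qed.
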